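(* Let $n\ge 2$ and let $e_1,\dots,e_k\in\mathbb{C}^{n\times n}$ be an anticommuting family of nilpotent matrices with $e_1^2,\dots,e_k^2\neq0$. Then $k\le 2(n-2)$.
   Context: A family $e_1,\dots,e_k$ of complex $n\times n$ matrices is called anticommuting if $e_ie_j=-e_je_i$ for all distinct $i,j\in\{1,\dots,k\}$. *)

From HB Require Import structures.
From mathcomp Require Import all_boot all_order all_algebra.
Set Implicit Arguments. Unset Strict Implicit. Unset Printing Implicit Defensive.
Import GRing.Theory Num.Theory.
Local Open Scope ring_scope.

(* m-th power of a square matrix via matrix multiplication (works for any n,
   including n = 0, where 'M_n has no ring structure). *)
Definition mxpow (R : pzRingType) (n : nat) (A : 'M[R]_n) (m : nat) : 'M[R]_n :=
  iter m (fun B => A *m B) 1%:M.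

Definition nilpotent_mx (R : pzRingType) (n : nat) (A : 'M[R]_n) : Prop :=
  exists m : nat, mxpow A m = 0.

Definition anticommuting (R : pzRingType) (n k : nat) (e : 'I_k -> 'M[R]_n) : Prop :=
  forall i j : 'I_k, i != j -> e i *m e j = - (e j *m e i).

(* Some nonzero matrix P is annihilated by every e_i on both
   sides and satisfies P^2 = 0: starting from P = e_1, multiply P on the left
   by the last power of e_i that does not kill it, for each i in turn; since
   powers of e_i anticommute or commute with each e_j, the annihilations
   obtained earlier survive, and P stays of the form e_1 Z with P e_j = +-e_j P.
   Over an algebraically closed field there are vectors v, w with
   w e_i^2 v <> 0 for all i.  The k x k matrix S_ij = w e_i e_j v then has
   S + S^T diagonal and invertible by anticommutation, so k <= 2 rank S.
   But S = R C where the columns e_j v of C lie in the hyperplane y^perp of a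
   nonzero row y of P, and R kills a nonzero column u of P, which lies in the
   same hyperplane because P^2 = 0; hence rank S <= n - 2. *)

From HB Require Import structures.
From mathcomp Require Import all_boot all_order all_algebra.
From mathcomp Require Import zify.
Import GRing.Theory Num.Theory.

Set Implicit Arguments.
Unset Strict Implicit.
Unset Printing Implicit Defensive.

Local Open Scope ring_scope.

Section MatrixPowers.
Variables (R : pzRingType) (n : nat).
Implicit Types A P : 'M[R]_n.

Lemma mxpow0 A : mxpow A 0 = 1%:M. Proof. by []. Qed.

Lemma mxpowS A m : mxpow A m.+1 = A *m mxpow A m. Proof. by []. Qed.

Lemma mxpowSr A m : mxpow A m.+1 = mxpow A m *m A.
Proof.
elim: m => [|m IHm]; first by rewrite mxpowS mxpow0 mulmx1 mul1mx.
by rewrite mxpowS {1}IHm mulmxA.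
Qed.

Lemma exists_last_nonzero_mxpow A P N :
  mxpow A N *m P = 0 -> P != 0 ->
  exists m, mxpow A m *m P != 0 /\ A *m (mxpow A m *m P) = 0.
Proof.
elim: N P => [|N IHN] P AP0 P_nz.
  by rewrite mxpow0 mul1mx in AP0; rewrite AP0 eqxx in P_nz.
have [AP_0|AP_nz] := eqVneq (A *m P) 0; first by exists 0%N; rewrite mxpow0 mul1mx.
have [|m [Am_nz Am_0]] := IHN (A *m P) _ AP_nz; first by rewrite mulmxA -mxpowSr.
by exists m.+1; rewrite mxpowSr -mulmxA.
Qed.

End MatrixPowers.

Section AnticommutingFamily.
Variables (F : fieldType) (n k : nat) (e : 'I_k -> 'M[F]_n).
Hypothesis e_anti : anticommuting e.

Lemma mxpow_anticomm i j m :
  mxpow (e i) m *m e j = (-1) ^+ ((i != j) * m) *: (e j *m mxpow (e i) m).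
Proof.
have [<-|ne_ij] := eqVneq i j; first by rewrite scale1r -mxpowSr.
have ne_ji : j != i by rewrite eq_sym.
rewrite mul1n; elim: m => [|m IHm]; first by rewrite mxpow0 scale1r mul1mx mulmx1.
rewrite mxpowS -mulmxA IHm -scalemxAr mulmxA e_anti //.
by rewrite mulNmx -mulmxA exprS mulN1r scaleNr scalerN.
Qed.

Lemma anticomm_mxpow i j m :
  e j *m mxpow (e i) m = (-1) ^+ ((i != j) * m) *: (mxpow (e i) m *m e j).
Proof. by rewrite mxpow_anticomm scalerA -expr2 sqrr_sign scale1r. Qed.

Hypothesis e_nil : forall i, nilpotent_mx (e i).

Lemma exists_left_annihilator_of_seq i0 (s : seq 'I_k) : e i0 != 0 ->
  exists P, [/\ P != 0, forall j, exists c, P *m e j = c *: (e j *m P),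
    exists Z, P = e i0 *m Z & forall j, j \in s -> e j *m P = 0].
Proof.
move=> ei0_nz; elim: s => [|i s [P [P_nz P_semicomm [Z defP] sP0]]].
  exists (e i0); split=> //; last by exists 1%:M; rewrite mulmx1.
  move=> j; have [<-|ne_i0j] := eqVneq i0 j; first by exists 1; rewrite scale1r.
  by exists (-1); rewrite e_anti // scaleN1r.
have [N eiN0] := e_nil i.
have [|m [Q_nz eiQ0]] := exists_last_nonzero_mxpow (A := e i) (N := N) _ P_nz.
  by rewrite eiN0 mul0mx.
exists (mxpow (e i) m *m P); split=> //.
- move=> j; have [c Pc] := P_semicomm j.
  exists (c * (-1) ^+ ((i != j) * m)).
  by rewrite -mulmxA Pc -scalemxAr mulmxA mxpow_anticomm -!scalemxAl scalerA mulmxA.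
- exists ((-1) ^+ ((i != i0) * m) *: (mxpow (e i) m *m Z)).
  by rewrite defP mulmxA mxpow_anticomm -scalemxAl -scalemxAr mulmxA.
- move=> j; rewrite inE => /predU1P [-> //|j_s].
  by rewrite mulmxA anticomm_mxpow -scalemxAl -mulmxA sP0 // mulmx0 scaler0.
Qed.

Lemma exists_two_sided_annihilator i0 : e i0 != 0 ->
  exists2 P, P != 0 &
    [/\ forall j, e j *m P = 0, forall j, P *m e j = 0 & P *m P = 0].
Proof.
move=> ei0_nz.
have [P [P_nz P_semicomm [Z defP] eP0]] :=
  exists_left_annihilator_of_seq (enum 'I_k) ei0_nz.
have {}eP0 j : e j *m P = 0 by rewrite eP0 ?mem_enum.
have Pe0 j : P *m e j = 0 by have [c ->] := P_semicomm j; rewrite eP0 scaler0.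
by exists P => //; split=> //; rewrite {2}defP mulmxA Pe0 mul0mx.
Qed.

End AnticommutingFamily.

Section AvoidingKernels.
Variables (F : closedFieldType) (I : finType) (n : nat).

Lemma exists_cV_mul_rV_neq0 (r : I -> 'rV[F]_n) :
  (forall i, r i != 0) -> exists v : 'cV[F]_n, forall i, (r i *m v) 0 0 != 0.
Proof.
move=> r_nz.
pose q i := \sum_(j < n) r i 0 j *: 'X^j.
have q_nz i : q i != 0.
  apply: contra (r_nz i) => /eqP q0; apply/eqP/rowP => j.
  have := congr1 (fun p : {poly F} => p`_j) q0.
  rewrite coef_sum coef0 mxE (bigD1 j) //= coefZ coefXn eqxx mulr1 => <-.
  rewrite big1 ?addr0 // => j' ne_j'j.
  by rewrite coefZ coefXn (_ : (j == j' :> nat) = false) ?mulr0 // eq_sym; apply: negbTE.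
have [t /rootPf q_t] : exists t, ~~ root (\prod_i q i) t.
  by apply/closed_nonrootP/prodf_neq0 => i _; exact: q_nz.
exists (\col_j t ^+ j) => i; apply: contraFN q_t => /eqP r_v0.
rewrite horner_prod; apply/prodf_eq0; exists i => //.
rewrite horner_sum; apply/eqP; rewrite -[RHS]r_v0 mxE; apply: eq_bigr => j _.
by rewrite hornerZ hornerXn mxE.
Qed.

Lemma exists_cV_mul_neq0 p (A : I -> 'M[F]_(p, n)) :
  (forall i, A i != 0) -> exists v : 'cV[F]_n, forall i, A i *m v != 0.
Proof.
move=> A_nz.
have /fin_all_exists [x A_x] i : exists x, row x (A i) != 0.
  by have /matrix0Pn [x [y Axy]] := A_nz i; exists x; apply/rV0Pn; exists y; rewrite mxE.
have [v Av] := exists_cV_mul_rV_neq0 A_x.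
exists v => i; apply: contraNneq (Av i) => Av0.
by rewrite -row_mul Av0 row0 mxE.
Qed.

End AvoidingKernels.

Section Ranks.
Variable F : fieldType.

Lemma mxrank_add_tr m (A : 'M[F]_m) : (\rank (A + A^T)%R <= 2 * \rank A)%N.
Proof. by apply: leq_trans (mxrank_add A A^T) _; rewrite mxrank_tr addnn mul2n. Qed.

Lemma mxrank_mul_le_subn2 m n p (A : 'M[F]_(m, n)) (B : 'M[F]_(n, p))
    (y : 'rV[F]_n) (u : 'cV[F]_n) :
  y != 0 -> u != 0 -> y *m u = 0 -> y *m B = 0 -> A *m u = 0 ->
  (\rank (A *m B) <= n - 2)%N.
Proof.
move=> y_nz u_nz yu0 yB0 Au0.
pose S := kermx y^T.
have rankS : \rank S = (n - 1)%N by rewrite mxrank_ker mxrank_tr rank_rV y_nz.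
have BS : (B^T <= S)%MS by apply/sub_kermxP; rewrite -trmx_mul yB0 trmx0.
have uSA : (u^T <= S :&: kermx A^T)%MS.
  by rewrite sub_capmx; apply/andP; split; apply/sub_kermxP;
    rewrite -trmx_mul ?yu0 ?Au0 trmx0.
have rank_SA : (1 <= \rank (S :&: kermx A^T))%N.
  by have := mxrankS uSA; rewrite rank_rV trmx_eq0 u_nz.
rewrite -mxrank_tr trmx_mul (leq_trans (mxrankS (submxMr A^T BS))) //.
have := mxrank_mul_ker S A^T; rewrite rankS; lia.
Qed.

End Ranks.

Definition sandwich_mx (R : pzRingType) n k (e : 'I_k -> 'M[R]_n)
    (w : 'rV[R]_n) (v : 'cV[R]_n) : 'M[R]_k :=
  \matrix_(i, j) (w *m e i *m e j *m v) 0 0.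

Section SandwichMatrix.
Variables (F : fieldType) (n k : nat) (e : 'I_k -> 'M[F]_n).
Variables (w : 'rV[F]_n) (v : 'cV[F]_n).

Lemma sandwich_mxE i j :
  sandwich_mx e w v i j = (w *m e i *m e j *m v) 0 0.
Proof. exact: mxE. Qed.

Lemma sandwich_mx_factor :
  sandwich_mx e w v = \matrix_i (w *m e i) *m (\matrix_j (e j *m v)^T)^T.
Proof.
apply/matrixP => i j; rewrite mxE -mulmxA !mxE.
by apply: eq_bigr => c _; rewrite !mxE.
Qed.

Lemma rank_sandwich_mx_le (y : 'rV[F]_n) (u : 'cV[F]_n) :
  y != 0 -> u != 0 -> y *m u = 0 ->
  (forall j, y *m e j = 0) -> (forall i, e i *m u = 0) ->
  (\rank (sandwich_mx e w v) <= n - 2)%N.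
Proof.
move=> y_nz u_nz yu0 ye0 eu0; rewrite sandwich_mx_factor.
apply: mxrank_mul_le_subn2 y_nz u_nz yu0 _ _.
- apply/trmx_inj; rewrite trmx_mul trmxK trmx0; apply/row_matrixP => j.
  by rewrite row_mul rowK row0 -trmx_mul mulmxA ye0 mul0mx trmx0.
- apply/row_matrixP => i.
  by rewrite row_mul rowK row0 -mulmxA eu0 mulmx0.
Qed.

Hypothesis e_anti : anticommuting e.

Lemma sandwich_mx_add_tr :
  sandwich_mx e w v + (sandwich_mx e w v)^T =
  diag_mx (\row_i ((w *m e i *m e i *m v) 0 0 *+ 2)).
Proof.
apply/matrixP => i j; rewrite [LHS]mxE [_^T i j]mxE !sandwich_mxE.
rewrite [RHS]mxE [X in X *+ _]mxE.
have [<-|ne_ij] := eqVneq i j; first by rewrite mulr2n.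
have addE (M N : 'M[F]_1) : M 0 0 + N 0 0 = (M + N) 0 0 by rewrite mxE.
rewrite mulr0n addE -!mulmxA -mulmxDr !mulmxA -mulmxDl.
by rewrite e_anti // addNr mul0mx mulmx0 mxE.
Qed.

End SandwichMatrix.

Lemma card_le_double_rank_sandwich_mx (F : numFieldType) n k (e : 'I_k -> 'M[F]_n)
    (w : 'rV[F]_n) (v : 'cV[F]_n) :
  anticommuting e -> (forall i, (w *m e i *m e i *m v) 0 0 != 0) ->
  (k <= 2 * \rank (sandwich_mx e w v))%N.
Proof.
move=> e_anti wv_nz.
have unit_sym : sandwich_mx e w v + (sandwich_mx e w v)^T \in unitmx.
  rewrite sandwich_mx_add_tr // unitmxE det_diag unitfE.
  by apply/prodf_neq0 => i _; rewrite mxE mulrn_eq0 negb_or wv_nz.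
by rewrite -{1}(mxrank_unit unit_sym) mxrank_add_tr.
Qed.

Theorem claim1 (C : numClosedFieldType) (n k : nat) (e : 'I_k -> 'M[C]_n) :
  (2 <= n)%N ->
  anticommuting e ->
  (forall i, nilpotent_mx (e i)) ->
  (forall i, e i *m e i != 0) ->
  (k <= 2 * (n - 2))%N.
Proof.
case: k e => [//|k] e _ e_anti e_nil e_sq_nz.
have e0_nz : e ord0 != 0 by apply: contraNneq (e_sq_nz ord0) => ->; rewrite mul0mx.
have [P P_nz [eP0 Pe0 PP0]] := exists_two_sided_annihilator e_anti e_nil e0_nz.
have /matrix0Pn [a [b Pab]] := P_nz.
have [v e_sq_v_nz] := exists_cV_mul_neq0 e_sq_nz.
have e_sq_v_tr_nz i : (e i *m e i *m v)^T != 0 by rewrite trmx_eq0.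
have [w' w'_nz] := exists_cV_mul_rV_neq0 e_sq_v_tr_nz.
have w_nz i : (w'^T *m e i *m e i *m v) 0 0 != 0.
  by rewrite -!mulmxA -[_ *m _]trmxK trmx_mul trmxK mxE !mulmxA.
apply: leq_trans (card_le_double_rank_sandwich_mx e_anti w_nz) (leq_mul (leqnn 2) _).
apply: (@rank_sandwich_mx_le _ _ _ _ _ _ (row a P) (col b P)).
- by apply/rV0Pn; exists b; rewrite mxE.
- by apply/cV0Pn; exists a; rewrite mxE.
- by rewrite colE -row_mul mulmxA PP0 mul0mx row0.
- by move=> j; rewrite -row_mul Pe0 row0.
- by move=> i; rewrite colE mulmxA eP0 mul0mx.
Qed.
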